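(* Let $\mathscr{G}$ be a semigroup with a left-invariant metric $d$. (1) Every idempotent of $\mathscr{G}$ (an element $e$ with $e^2=e$) is a left identity (i.e. $eg=g$ for all $g\in\mathscr{G}$). Consequently every right identity of $\mathscr{G}$ is a two-sided identity. (2) Suppose $\mathscr{G}$ has no right identity (equivalently, no two-sided identity). Then the following are equivalent: (a) there exist a monoid $(M,\cdot,e)$ with a left-invariant metric $d_M$ and an injective semigroup homomorphism $\iota:\mathscr{G}\to M$ that is an isometry ($d_M(\iota a,\iota b)=d(a,b)$) with $\iota(\mathscr{G})=M\setminus\{e\}$; (b) $d$ is strongly left-invariant. In particular, if $d$ is strongly left-invariant and $\mathscr{G}$ has no right identity, then $\mathscr{G}$ has no idempotents.
   Context: A metric $d$ on a semigroup $\mathscr{G}$ is left-invariant if $d(ca,cb)=d(a,b)$ for all $a,b,c\in\mathscr{G}$, and strongly left-invariant if moreover $d(a,ab)=d(b,b^2)$ for all $a,b\in\mathscr{G}$. A left-invariant metric monoid is a monoid with a left-invariant metric. *)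

From Stdlib Require Import Reals.
Open Scope R_scope.

Definition is_semigroup {G : Type} (mul : G -> G -> G) : Prop :=
  forall a b c, mul a (mul b c) = mul (mul a b) c.

Definition is_monoid {M : Type} (mul : M -> M -> M) (e : M) : Prop :=
  is_semigroup mul /\ (forall x, mul e x = x) /\ (forall x, mul x e = x).

Definition is_metric {X : Type} (d : X -> X -> R) : Prop :=
  (forall x y, 0 <= d x y) /\
  (forall x y, d x y = 0 <-> x = y) /\
  (forall x y, d x y = d y x) /\
  (forall x y z, d x z <= d x y + d y z).

Definition left_invariant {G : Type} (mul : G -> G -> G) (d : G -> G -> R) : Prop :=
  forall a b c, d (mul c a) (mul c b) = d a b.

Definition strongly_left_invariant {G : Type} (mul : G -> G -> G) (d : G -> G -> R) : Prop :=
  left_invariant mul d /\ forall a b, d a (mul a b) = d b (mul b b).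

Definition idempotent {G : Type} (mul : G -> G -> G) (e : G) : Prop := mul e e = e.
Definition left_identity {G : Type} (mul : G -> G -> G) (e : G) : Prop := forall g, mul e g = g.
Definition right_identity {G : Type} (mul : G -> G -> G) (e : G) : Prop := forall g, mul g e = g.
Definition two_sided_identity {G : Type} (mul : G -> G -> G) (e : G) : Prop :=
  left_identity mul e /\ right_identity mul e.

From Stdlib Require Import Reals Lra.
Open Scope R_scope.

(* Part (1): for an idempotent e, translating the pair (eg, g) by e gives
   d(eg, g) = d(e(eg), eg) = d(eg, eg) = 0, so eg = g.  A right identity is
   idempotent, hence also a left identity.

   Part (2), (a) -> (b): inside the monoid, d(a, ab) = d_M(ιa·e, ιa·ιb) =
   d_M(e, ιb), and likewise d(b, b²) = d_M(e, ιb).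
   Part (2), (b) -> (a): adjoin a new identity to G (the monoid [option G]
   with [None] as identity) and extend d by declaring the distance from the
   new identity to b to be d(b, b²), which equals d(a, ab) for every a.
   Strong left invariance makes this extension a left-invariant metric;
   positivity of the new distances is exactly the absence of idempotents,
   which follows from strong invariance and the absence of a right identity:
   if e is idempotent then d(g, ge) = d(e, e²) = 0 for all g. *)

Lemma metric_refl {X : Type} (d : X -> X -> R) :
  is_metric d -> forall x, d x x = 0.
Proof. intros (_ & Hz & _) x. apply Hz. reflexivity. Qed.

Section LeftInvariantSemigroup.

Context {G : Type} {mul : G -> G -> G} {d : G -> G -> R}.
Hypothesis Hsg : is_semigroup mul.
Hypothesis Hmet : is_metric d.
Hypothesis Hli : left_invariant mul d.

(* Translating the pair (eg, g) by an idempotent e identifies its points. *)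
Lemma idempotent_is_left_identity (e : G) :
  idempotent mul e -> left_identity mul e.
Proof.
  intros He g. apply Hmet. rewrite <- (Hli (mul e g) g e), Hsg, He.
  apply metric_refl, Hmet.
Qed.

(* A right identity is idempotent, hence also a left identity. *)
Lemma right_identity_is_two_sided (e : G) :
  right_identity mul e -> two_sided_identity mul e.
Proof.
  intros He. split; [| exact He].
  apply idempotent_is_left_identity, He.
Qed.

(* Under strong left invariance an idempotent e satisfies
   d(g, ge) = d(e, e²) = 0, so it is a right identity. *)
Lemma strong_idempotent_is_right_identity (e : G) :
  strongly_left_invariant mul d -> idempotent mul e -> right_identity mul e.
Proof.
  intros [_ Hs] He g. symmetry. apply Hmet.
  rewrite Hs, He. apply metric_refl, Hmet.
Qed.

(* An isometric embedding into a left-invariant metric monoid forces strong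
   left invariance: both d(a, ab) and d(b, b²) equal d_M(e, ιb). *)
Lemma strong_of_monoid_embedding {M : Type} {mulM : M -> M -> M} {eM : M}
    {dM : M -> M -> R} {iota : G -> M} :
  is_monoid mulM eM -> left_invariant mulM dM ->
  (forall a b, iota (mul a b) = mulM (iota a) (iota b)) ->
  (forall a b, dM (iota a) (iota b) = d a b) ->
  strongly_left_invariant mul d.
Proof.
  intros (_ & _ & Hright) HliM Hhom Hiso.
  split; [exact Hli |]. intros a b.
  rewrite <- !Hiso, !Hhom.
  assert (Hcenter : forall x y, dM x (mulM x y) = dM eM y).
  { intros x y. rewrite <- (Hright x) at 1. apply HliM. }
  rewrite !Hcenter. reflexivity.
Qed.

End LeftInvariantSemigroup.

Section AdjoinIdentity.

Context {G : Type} (mul : G -> G -> G) (d : G -> G -> R).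

Definition adjoin_mul (x y : option G) : option G :=
  match x, y with
  | Some a, Some b => Some (mul a b)
  | None, y => y
  | x, None => x
  end.

(* The distance from the adjoined identity to b. *)
Definition unit_dist (b : G) : R := d b (mul b b).

Definition adjoin_dist (x y : option G) : R :=
  match x, y with
  | Some a, Some b => d a b
  | None, Some b | Some b, None => unit_dist b
  | None, None => 0
  end.

Lemma adjoin_monoid : is_semigroup mul -> is_monoid adjoin_mul None.
Proof.
  intros Hsg. split; [| split].
  - intros [a|] [b|] [c|]; simpl; try reflexivity. rewrite Hsg. reflexivity.
  - intros [x|]; reflexivity.
  - intros [x|]; reflexivity.
Qed.

Hypothesis Hmet : is_metric d.
Hypothesis Hstrong : strongly_left_invariant mul d.
Hypothesis Hno_idem : forall e : G, ~ idempotent mul e.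

Lemma unit_dist_translate (a b : G) : unit_dist b = d a (mul a b).
Proof. unfold unit_dist. symmetry. apply Hstrong. Qed.

Lemma unit_dist_neq0 (b : G) : unit_dist b <> 0.
Proof.
  intros H. apply (Hno_idem b). apply Hmet.
  destruct Hmet as (_ & _ & Hsym & _). rewrite Hsym. exact H.
Qed.

(* Triangle inequality through an old point: d(e, b) <= d(e, a) + d(a, b),
   from d(a, ab) <= d(a, a²) + d(a², ab) and d(a², ab) = d(a, b). *)
Lemma unit_dist_triangle (a b : G) : unit_dist b <= unit_dist a + d a b.
Proof.
  destruct Hmet as (_ & _ & _ & Htri). destruct Hstrong as [Hli _].
  rewrite (unit_dist_translate a a), (unit_dist_translate a b).
  rewrite <- (Hli a b a). apply Htri.
Qed.

(* Triangle inequality through the new identity: d(a, b) <= d(a, e) + d(e, b),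
   from d(a², ab) <= d(a², a) + d(a, ab). *)
Lemma dist_le_unit_dists (a b : G) : d a b <= unit_dist a + unit_dist b.
Proof.
  destruct Hmet as (_ & _ & Hsym & Htri). destruct Hstrong as [Hli _].
  rewrite (unit_dist_translate a a), (unit_dist_translate a b).
  rewrite <- (Hli a b a), (Hsym a (mul a a)). apply Htri.
Qed.

Lemma adjoin_metric : is_metric adjoin_dist.
Proof.
  destruct Hmet as (Hnn & Hz & Hsym & Htri).
  split; [| split; [| split]].
  - intros [a|] [b|]; simpl; try lra; apply Hnn.
  - intros [a|] [b|]; simpl; split; intro H; try discriminate;
      try (exfalso; eapply unit_dist_neq0; eassumption); try reflexivity.
    + f_equal. apply Hz, H.
    + injection H as ->. apply metric_refl, Hmet.
  - intros [a|] [b|]; simpl; try reflexivity. apply Hsym.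
  - pose proof unit_dist_triangle as T1. pose proof dist_le_unit_dists as T2.
    assert (Hpos : forall a, 0 <= unit_dist a) by (intro; apply Hnn).
    intros [a|] [b|] [c|]; simpl.
    + apply Htri.
    + specialize (T1 b a). rewrite (Hsym b a) in T1. lra.
    + apply T2.
    + specialize (Hpos a). lra.
    + apply T1.
    + specialize (Hpos b). lra.
    + lra.
    + lra.
Qed.

(* Left invariance under translation by the new identity is trivial; under
   translation by c in G it is left invariance of d together with
   [unit_dist_translate] for the mixed pairs. *)
Lemma adjoin_left_invariant : left_invariant adjoin_mul adjoin_dist.
Proof.
  destruct Hstrong as [Hli _].
  intros x y [c|]; [| reflexivity].
  destruct x as [a|], y as [b|]; simpl.
  - apply Hli.
  - rewrite (unit_dist_translate c a). apply Hmet.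
  - rewrite (unit_dist_translate c b). reflexivity.
  - apply metric_refl, Hmet.
Qed.

End AdjoinIdentity.

Theorem theorem5p1 (G : Type) (mul : G -> G -> G) (d : G -> G -> R)
  (Hsg : is_semigroup mul) (Hmet : is_metric d) (Hli : left_invariant mul d) :
  (* (1) *)
  (forall e : G, idempotent mul e -> left_identity mul e) /\
  (forall e : G, right_identity mul e -> two_sided_identity mul e) /\
  (* (2) *)
  ((forall e : G, ~ right_identity mul e) ->
     ((exists (M : Type) (mulM : M -> M -> M) (eM : M) (dM : M -> M -> R)
              (iota : G -> M),
          is_monoid mulM eM /\ is_metric dM /\ left_invariant mulM dM /\
          (forall a b, iota (mul a b) = mulM (iota a) (iota b)) /\
          (forall a b, iota a = iota b -> a = b) /\
          (forall a b, dM (iota a) (iota b) = d a b) /\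
          (forall m : M, (exists g : G, iota g = m) <-> m <> eM))
      <-> strongly_left_invariant mul d) /\
     (strongly_left_invariant mul d -> forall e : G, ~ idempotent mul e)).
Proof.
  split; [exact (idempotent_is_left_identity Hsg Hmet Hli) |].
  split; [exact (right_identity_is_two_sided Hsg Hmet Hli) |].
  intros Hno_right.
  assert (Hno_idem : strongly_left_invariant mul d -> forall e, ~ idempotent mul e).
  { intros Hs e He. exact (Hno_right e (strong_idempotent_is_right_identity Hmet e Hs He)). }
  split; [split | exact Hno_idem].
  - intros (M & mulM & eM & dM & iota & Hmon & _ & HliM & Hhom & _ & Hiso & _).
    exact (strong_of_monoid_embedding Hli Hmon HliM Hhom Hiso).
  - intros Hs.
    exists (option G), (adjoin_mul mul), None, (adjoin_dist mul d), Some.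
    split; [exact (adjoin_monoid mul Hsg) |].
    split; [exact (adjoin_metric mul d Hmet Hs (Hno_idem Hs)) |].
    split; [exact (adjoin_left_invariant mul d Hmet Hs) |].
    split; [reflexivity |].
    split; [intros a b H; injection H as ->; reflexivity |].
    split; [reflexivity |].
    intros [g|]; split.
    + discriminate.
    + intros _. exists g. reflexivity.
    + intros [g Hg]. discriminate.
    + contradiction.
Qed.
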